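(* Assume the setting described in the context. Let $\pi$ be a permutation of $F$. If $\tau$ is a $\pi$-stable walk with word $W$ and initial state $\sigma_1$, then $R_W\in\mathrm{Ind}(F_{\sigma_1})$.
   Context: Setting: $\Omega$ is a finite set and $F$ a finite set of flaws, each a nonempty subset of $\Omega$; $F_\sigma=\{f:\sigma\in f\}$. For $\sigma\in\Omega$ and $f\in F_\sigma$ there is a probability distribution $\rho(\cdot\mid f,\sigma)$ with support $A(f,\sigma)$. A walk is a sequence $\sigma_1\xrightarrow{w_1}\sigma_2\cdots\xrightarrow{w_t}\sigma_{t+1}$ with $w_i\in F_{\sigma_i}$ and $\sigma_{i+1}\in A(w_i,\sigma_i)$, with word $w_1\ldots w_t$. $\sim$ is a symmetric relation on $F$ (loops allowed), $\Gamma(f)=\{g:f\sim g\}$, $\Gamma^+(f)=\Gamma(f)\cup\{f\}$, $\Gamma^+(S)=\bigcup_{f\in S}\Gamma^+(f)$. It is assumed that for every step $\sigma\xrightarrow{f}\sigma'$, $F_{\sigma'}\subseteq(F_\sigma\setminus\{f\})\cup\Gamma(f)$. $S$ is independent if $f\not\sim g$ for distinct $f,g\in S$; $\mathrm{Ind}(S)$ is the family of independent subsets of $S$. A sequence $(I_1,\ldots,I_s)$, $s\ge1$, is stable if $I_r\in\mathrm{Ind}(F)$ and $I_{r+1}\subseteq\Gamma^+(I_r)$. A word $W$ is stable if $W=W_1\ldots W_s$ with nonempty words $W_r$ of distinct flaws whose flaw sets $I_r$ form a stable sequence. It is $\pi$-stable if additionally each $W_r$ is strictly increasing in the order induced by $\pi$.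 $R_W=I_1$ (and $R_W=\varnothing$ for the empty word). A walk is $\pi$-stable if its word is. *)

From mathcomp Require Import all_boot all_order all_algebra.
Set Implicit Arguments. Unset Strict Implicit. Unset Printing Implicit Defensive.
Import Order.TTheory GRing.Theory Num.Theory.

Section Defs.
Variable Omega : finType.
Notation flaw := {set Omega}.

Definition Fs (F : {set flaw}) (sigma : Omega) : {set flaw} :=
  [set f in F | sigma \in f].

Definition supp {R : numDomainType} (rho : flaw -> Omega -> Omega -> R)
  (f : flaw) (sigma : Omega) : {set Omega} :=
  [set s' | rho f sigma s' != 0%R].

Definition Gam (F : {set flaw}) (sim : rel flaw) (f : flaw) : {set flaw} :=
  [set g in F | sim f g].
Definition GamP (F : {set flaw}) (sim : rel flaw) (f : flaw) : {set flaw} :=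
  f |: Gam F sim f.
Definition GamPS (F : {set flaw}) (sim : rel flaw) (S : {set flaw}) : {set flaw} :=
  \bigcup_(f in S) GamP F sim f.

Definition indep (sim : rel flaw) (S : {set flaw}) : bool :=
  [forall f in S, forall g in S, (f != g) ==> ~~ sim f g].

Definition inInd (sim : rel flaw) (S I : {set flaw}) : bool :=
  (I \subset S) && indep sim I.

(* A walk from sigma1 given as the list of steps (w_i, sigma_{i+1}) *)
Fixpoint is_walk {R : numDomainType} (F : {set flaw})
  (rho : flaw -> Omega -> Omega -> R) (sigma : Omega)
  (steps : seq (flaw * Omega)) : bool :=
  if steps is (w, s') :: st then
    [&& w \in Fs F sigma, s' \in supp rho w sigma & is_walk F rho s' st]
  else true.

Definition word (steps : seq (flaw * Omega)) : seq flaw := map fst steps.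

(* order induced by the permutation pi (a listing of F): f <_pi g *)
Definition pi_lt (pi : seq flaw) (f g : flaw) : bool := index f pi < index g pi.

Definition pi_stable_dec (F : {set flaw}) (sim : rel flaw) (pi : seq flaw)
  (W : seq flaw) (Ws : seq (seq flaw)) : Prop :=
  (W = flatten Ws /\ Ws != [::]) /\
  [/\
      all (fun Wr => (Wr != [::]) && uniq Wr) Ws,
      all (fun Wr => inInd sim F [set x in Wr]) Ws,
      (forall r, r.+1 < size Ws ->
         [set x in nth [::] Ws r.+1] \subset GamPS F sim [set x in nth [::] Ws r])
    & all (sorted (pi_lt pi)) Ws].

Definition pi_stable F sim pi W : Prop := exists Ws, pi_stable_dec F sim pi W Ws.

Definition R_of (Ws : seq (seq flaw)) : {set flaw} := [set x in head [::] Ws].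

End Defs.

From mathcomp Require Import all_boot all_order all_algebra.
Import Order.TTheory GRing.Theory Num.Theory.
Set Implicit Arguments. Unset Strict Implicit.
Local Open Scope ring_scope.

(* Let f be a flaw of the first block I_1 = R_W, occurring at step i of the
   walk. The flaws w_1, ..., w_(i-1) addressed before it are distinct from f
   and not adjacent to it (they lie in the independent set I_1). A step along
   w can only create flaws of Gamma(w), so going backwards from sigma_i to
   sigma_1 the flaw f is never lost: f is present in sigma_1.
   Neither the order pi nor the probabilities rho play any role. *)

Section Independence.
Variables (Omega : finType) (sim : rel {set Omega}).

Lemma indep_nsim (S : {set {set Omega}}) f g :
  indep sim S -> f \in S -> g \in S -> f != g -> ~~ sim f g.
Proof.
move=> HS Hf Hg; move/forallP/(_ f): HS; rewrite Hf => /forallP/(_ g).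
by rewrite Hg implyTb => /implyP.
Qed.

Lemma indep_subset (I J : {set {set Omega}}) :
  I \subset J -> indep sim J -> indep sim I.
Proof.
move=> /subsetP IJ HJ; apply/forallP=> f; apply/implyP=> Hf.
apply/forallP=> g; apply/implyP=> Hg; apply/implyP.
exact: indep_nsim HJ (IJ f Hf) (IJ g Hg).
Qed.

End Independence.

Section Walks.
Variables (R : numDomainType) (Omega : finType) (F : {set {set Omega}}).
Variables (rho : {set Omega} -> Omega -> Omega -> R) (sim : rel {set Omega}).
Hypothesis Hstep : forall sigma f sigma', f \in Fs F sigma -> sigma' \in supp rho f sigma ->
  Fs F sigma' \subset (Fs F sigma :\ f) :|: Gam F sim f.

Lemma step_flaw_back sigma w sigma' g :
  w \in Fs F sigma -> sigma' \in supp rho w sigma ->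
  g \in Fs F sigma' -> g != w -> ~~ sim w g -> g \in Fs F sigma.
Proof.
move=> Hw Hs Hg Hgw Hnsim.
move: (subsetP (Hstep Hw Hs) g Hg); rewrite !inE Hgw /=.
by case/orP=> [//|/andP[_ Hsim]]; rewrite Hsim in Hnsim.
Qed.

Lemma walk_indep_prefix_subset sigma steps (L : seq {set Omega}) :
  is_walk F rho sigma steps -> prefix L (word steps) ->
  uniq L -> indep sim [set x in L] -> {subset L <= Fs F sigma}.
Proof.
elim: steps sigma L => [|[w sigma'] steps IH] sigma [|a L] //=.
move=> /and3P[Hw Hs Hwalk] /andP[/eqP-> Hpre] /andP[HwL HuL] Hind.
have HindL : indep sim [set x in L].
  by apply: indep_subset Hind; apply/subsetP=> x; rewrite !inE => ->; rewrite orbT.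
move=> g; rewrite inE => /orP[/eqP-> //|HgL].
apply: step_flaw_back Hw Hs (IH _ _ Hwalk Hpre HuL HindL g HgL) _ _.
  by apply: contraNneq HwL => <-.
apply: indep_nsim Hind _ _ _; rewrite ?inE ?eqxx ?HgL ?orbT //.
by apply: contraNneq HwL => ->.
Qed.

End Walks.

Theorem lemma3 (R : numDomainType) (Omega : finType) (F : {set {set Omega}})
  (rho : {set Omega} -> Omega -> Omega -> R) (sim : rel {set Omega})
  (pi : seq {set Omega})
  (HFne : forall f, f \in F -> f != set0)
  (Hrho0 : forall f sigma s', f \in F -> sigma \in f -> 0 <= rho f sigma s')
  (Hrho1 : forall f sigma, f \in F -> sigma \in f -> \sum_(s' : Omega) rho f sigma s' = 1)
  (Hsym : forall f g, f \in F -> g \in F -> sim f g = sim g f)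
  (Hstep : forall sigma f sigma', f \in Fs F sigma -> sigma' \in supp rho f sigma ->
     Fs F sigma' \subset (Fs F sigma :\ f) :|: Gam F sim f)
  (Hpi : perm_eq pi (enum F))
  (sigma1 : Omega) (steps : seq ({set Omega} * Omega))
  (Hwalk : is_walk F rho sigma1 steps)
  (Ws : seq (seq {set Omega}))
  (Hst : pi_stable_dec F sim pi (word steps) Ws) :
  inInd sim (Fs F sigma1) (R_of Ws).
Proof.
case: Hst => [[HW HWs] [Hblocks HInd _ _]].
case: Ws HW HWs Hblocks HInd => [|W1 Ws] //= HW _ /andP[/andP[_ HuW1] _] /andP[/andP[_ HindW1] _].
rewrite /inInd /R_of /= HindW1 andbT.
apply/subsetP=> f; rewrite inE.
apply: (walk_indep_prefix_subset Hstep Hwalk _ HuW1 HindW1).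
by rewrite HW prefix_prefix.
Qed.
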